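(* Let $\alpha>0$. Let $u_0:\mathbb{R}\to[0,1]$ be uniformly continuous with $u_0>0$ on $\mathbb{R}$, $\liminf_{x\to-\infty}u_0>0$, $\lim_{x\to+\infty}u_0=0$, of class $C^2$ and nonincreasing on $[\xi_0,+\infty)$ for some $\xi_0>0$, and such that $\varphi_0:=-\ln u_0$ satisfies $\varphi_0'=o(\varphi_0^{-\alpha})$ and $\varphi_0''=o(\varphi_0')$ as $x\to+\infty$. Let $\rho>0$ and define $$w(t,x):=\exp\Big\{1-\big[(1+\varphi_0(x))^{\alpha+1}-\rho(\alpha+1)t\big]^{\frac{1}{\alpha+1}}\Big\},\qquad x_0(t):=\sup\Big\{x\in\mathbb{R}: u_0(x)=\exp\big(1-(\rho(\alpha+1)t+1)^{\frac{1}{\alpha+1}}\big)\Big\}.$$ Then there is $t^1>0$ such that $$w_x(t,x)+w_{xx}(t,x)\le 0\quad\text{for all } x\ge x_0(t)\text{ and } t\ge t^1.$$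
   Context: $w$ solves $w_t=\rho\, w/(1-\ln w)^\alpha$ with $w(0,\cdot)=u_0$; one has $w(t,x_0(t))=1$ and $0<w(t,x)\le1$ for $x\ge x_0(t)$. *)

From Stdlib Require Import Reals.
From Coquelicot Require Import Coquelicot.
Open Scope R_scope.

Definition phi0 (u0 : R -> R) (x : R) : R := - ln (u0 x).

Definition wfun (u0 : R -> R) (alpha rho : R) (t x : R) : R :=
  exp (1 - Rpower (Rpower (1 + phi0 u0 x) (alpha + 1) - rho * (alpha + 1) * t)
                  (1 / (alpha + 1))).

Definition level (alpha rho t : R) : R :=
  exp (1 - Rpower (rho * (alpha + 1) * t + 1) (1 / (alpha + 1))).

Definition x0 (u0 : R -> R) (alpha rho t : R) : Rbar :=
  Lub_Rbar (fun x => u0 x = level alpha rho t).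

Definition unif_continuous (f : R -> R) : Prop :=
  forall eps : R, 0 < eps -> exists delta : R, 0 < delta /\
    forall x y : R, Rabs (x - y) < delta -> Rabs (f x - f y) < eps.

Definition little_o_pinfty (f g : R -> R) : Prop :=
  forall eps : R, 0 < eps -> exists M : R, forall x : R, M <= x ->
    Rabs (f x) <= eps * Rabs (g x).

(* Write w(t, .) = F o phi0 with F(p) = exp (1 - ((1 + p)^(a+1) - C)^(1/(a+1))) and
   C = rho (a + 1) t.  Then F' = - F H and F'' = F H (H - l), where l = H'/H
   ([profile_rate] and [rate_log_derivative]), and
     w_x + w_xx = F H ((H - l) phi0'^2 - phi0' - phi0'').
   Once (1 + p)^(a+1) - C >= 1 one has H - l <= (a + 1) (1 + p)^a <= (a + 1) 2^a p^a, so the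
   bracket is nonpositive as soon as phi0' >= 0, phi0'' >= - phi0'/2 and
   (a + 1) 2^a phi0^a phi0' <= 1/2, which the monotonicity and the two o-hypotheses give far
   to the right.  A point x >= x0(t) satisfies u0(x) <= level(t), since otherwise the
   intermediate value theorem would put a point of the level set beyond x; this yields
   (1 + phi0 x)^(a+1) >= C + 1.  Finally level(t) -> 0 while u0 is bounded below on every
   half-line (-oo, X], so x0(t) lies beyond any prescribed X for t large. *)

From Stdlib Require Import Reals Lra.
From Coquelicot Require Import Coquelicot.
Open Scope R_scope.

Lemma unif_continuous_continuity f : unif_continuous f -> continuity f.
Proof.
intros Hf y e He. destruct (Hf e He) as [d [Hd Hfd]].
exists d; split; [exact Hd|]. intros z [_ Hz]. exact (Hfd z y Hz).
Qed.

Lemma le_level_right_of_sup_level (f : R -> R) (L x : R) :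
  continuity f -> is_lim f p_infty 0 -> 0 < L ->
  Rbar_le (Lub_Rbar (fun y => f y = L)) x -> f x <= L.
Proof.
intros Hc Hlim HL Hx. apply Rnot_lt_le. intros HxL.
apply is_lim_spec in Hlim. destruct (Hlim (mkposreal L HL)) as [M HM].
set (z := Rmax M x + 1).
assert (Hz : M < z /\ x < z) by (unfold z; pose proof (Rmax_l M x); pose proof (Rmax_r M x); lra).
specialize (HM z (proj1 Hz)). simpl in HM. rewrite Rminus_0_r in HM.
pose proof (Rle_abs (f z)).
destruct (IVT (fun y => L - f y) x z) as [y [Hyxz Hy]]; [|lra..|].
{ intros y. apply continuity_pt_minus; [apply continuity_pt_const; now intros ? ?|apply Hc]. }
assert (Hyx : Rbar_le y x).
{ apply Rbar_le_trans with (2 := Hx). apply Lub_Rbar_correct. lra. }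
simpl in Hyx. replace y with x in Hy by lra. lra.
Qed.

Lemma continuity_pos_lower_bound_left (f : R -> R) (X : R) :
  continuity f -> (forall y, 0 < f y) ->
  (exists c M, 0 < c /\ forall y, y <= M -> c <= f y) ->
  exists m, 0 < m /\ forall y, y <= X -> m <= f y.
Proof.
intros Hc Hpos [c [M [Hc0 HcM]]].
destruct (continuity_ab_min f (Rmin M X) X) as [ymin [Hmin _]].
{ apply Rmin_r. }
{ intros; apply Hc. }
exists (Rmin c (f ymin)). split; [now apply Rmin_glb_lt|].
intros y Hy. destruct (Rle_or_lt y M) as [HyM|HyM].
- apply Rle_trans with c; [apply Rmin_l|auto].
- apply Rle_trans with (f ymin); [apply Rmin_r|]. apply Hmin.
  pose proof (Rmin_l M X). lra.
Qed.

Lemma is_derive_nonneg_of_nondecreasing (f : R -> R) (x l : R) :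
  (forall y, x <= y -> f x <= f y) -> is_derive f x l -> 0 <= l.
Proof.
intros Hf Hd. apply Rnot_lt_le. intros Hl.
apply is_derive_Reals in Hd. destruct (Hd (- l) ltac:(lra)) as [d Hdl].
pose proof (cond_pos d) as Hd0.
specialize (Hdl (d / 2) ltac:(lra)). rewrite Rabs_pos_eq in Hdl by lra.
specialize (Hdl ltac:(lra)).
assert (0 <= (f (x + d / 2) - f x) / (d / 2)).
{ apply Rdiv_le_0_compat; [|lra]. specialize (Hf (x + d / 2)). lra. }
pose proof (Rle_abs ((f (x + d / 2) - f x) / (d / 2) - l)). lra.
Qed.

Lemma is_derive2_comp (F F' g : R -> R) (x l2 : R) :
  locally x (ex_derive g) -> ex_derive (Derive g) x ->
  locally (g x) (fun q => is_derive F q (F' q)) -> is_derive F' (g x) l2 ->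
  is_derive (fun y => F (g y)) x (Derive g x * F' (g x)) /\
  is_derive (Derive (fun y => F (g y))) x
    (Derive (Derive g) x * F' (g x) + Derive g x ^ 2 * l2).
Proof.
intros Hg Hg2 HF HF'.
assert (HFg : locally x (fun y => is_derive F (g y) (F' (g y)))).
{ exact (ex_derive_continuous g x (locally_singleton _ _ Hg) _ HF). }
assert (Hd : locally x (fun y => is_derive (fun y => F (g y)) y (Derive g y * F' (g y)))).
{ apply (filter_imp (fun y => ex_derive g y /\ is_derive F (g y) (F' (g y)))).
  - intros y [Hgy HFy]. exact (is_derive_comp F g y _ _ HFy (Derive_correct _ _ Hgy)).
  - now apply filter_and. }
split; [exact (locally_singleton _ _ Hd)|].
apply (is_derive_ext_loc (fun y => Derive g y * F' (g y))).
- revert Hd. apply filter_imp. intros y Hy. symmetry. now apply is_derive_unique.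
- replace (Derive g x ^ 2 * l2) with (Derive g x * (Derive g x * l2)) by ring.
  apply (is_derive_mult (Derive g) (fun y => F' (g y))).
  + now apply Derive_correct.
  + exact (is_derive_comp F' g x _ _ HF' (Derive_correct _ _ (locally_singleton _ _ Hg))).
  + intros; apply Rmult_comm.
Qed.

Definition shifted_power (a C p : R) : R := Rpower (1 + p) (a + 1) - C.

(* [wfun u0 a rho t] is convertible to [fun x => profile a (rho * (a + 1) * t) (phi0 u0 x)]. *)
Definition profile (a C p : R) : R :=
  exp (1 - Rpower (shifted_power a C p) (1 / (a + 1))).

Definition profile_rate (a C p : R) : R :=
  Rpower (shifted_power a C p) (1 / (a + 1)) * Rpower (1 + p) a / shifted_power a C p.

Definition rate_log_derivative (a C p : R) : R :=
  a / (1 + p) - a * Rpower (1 + p) a / shifted_power a C p.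

Lemma exp_succ_mult_ln a x : 0 < x -> exp ((a + 1) * ln x) = exp (a * ln x) * x.
Proof. intros Hx. rewrite Rmult_plus_distr_r, Rmult_1_l, exp_plus, exp_ln; auto. Qed.

Lemma is_derive_profile a C p : 0 < a + 1 -> 0 < 1 + p -> 0 < shifted_power a C p ->
  is_derive (profile a C) p (- profile a C p * profile_rate a C p).
Proof.
intros Ha Hp Hs. unfold profile, profile_rate, shifted_power, Rpower in *.
auto_derive; [repeat split; lra|].
rewrite !exp_succ_mult_ln in * by lra.
unfold Rminus in *. field; lra.
Qed.

Lemma is_derive_profile_rate a C p : 0 < a + 1 -> 0 < 1 + p -> 0 < shifted_power a C p ->
  is_derive (profile_rate a C) p (profile_rate a C p * rate_log_derivative a C p).
Proof.
intros Ha Hp Hs.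
unfold profile_rate, rate_log_derivative, shifted_power, Rpower in *.
auto_derive; [repeat split; lra|].
rewrite !exp_succ_mult_ln in * by lra.
unfold Rminus in *. field; lra.
Qed.

Lemma is_derive_profile_slope a C p : 0 < a + 1 -> 0 < 1 + p -> 0 < shifted_power a C p ->
  is_derive (fun q => - profile a C q * profile_rate a C q) p
    (profile a C p * profile_rate a C p * (profile_rate a C p - rate_log_derivative a C p)).
Proof.
intros Ha Hp Hs.
replace (profile a C p * profile_rate a C p * (profile_rate a C p - rate_log_derivative a C p))
  with (- (- profile a C p * profile_rate a C p) * profile_rate a C p
        + - profile a C p * (profile_rate a C p * rate_log_derivative a C p)) by ring.
apply (is_derive_mult (fun q => - profile a C q) (profile_rate a C)).
- exact (is_derive_opp _ _ _ (is_derive_profile a C p Ha Hp Hs)).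
- now apply is_derive_profile_rate.
- intros; apply Rmult_comm.
Qed.

Lemma profile_rate_pos a C p : 0 < shifted_power a C p -> 0 < profile_rate a C p.
Proof.
intros Hs. unfold profile_rate, Rpower.
apply Rdiv_lt_0_compat; [apply Rmult_lt_0_compat; apply exp_pos|exact Hs].
Qed.

Lemma profile_rate_sub_log_derivative_le a C p : 0 <= a -> 0 < 1 + p -> 1 <= shifted_power a C p ->
  profile_rate a C p - rate_log_derivative a C p <= (a + 1) * Rpower (1 + p) a.
Proof.
intros Ha Hp Hs. unfold profile_rate, rate_log_derivative.
set (s := shifted_power a C p) in *. set (K := Rpower (1 + p) a).
assert (HK : 0 < K) by apply exp_pos.
assert (HG : Rpower s (1 / (a + 1)) <= s).
{ rewrite <- (Rpower_1 s) at 2 by lra. apply Rle_Rpower; [lra|].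
  apply Rmult_le_reg_r with (a + 1); [lra|]. field_simplify; lra. }
assert (Hinv : 0 < / s <= 1).
{ split; [apply Rinv_0_lt_compat; lra|]. rewrite <- Rinv_1. apply Rinv_le_contravar; lra. }
assert (HGs : Rpower s (1 / (a + 1)) * / s <= 1).
{ apply Rle_trans with (s * / s); [apply Rmult_le_compat_r; lra|]. rewrite Rinv_r; lra. }
assert (0 <= a * / (1 + p)).
{ apply Rmult_le_pos; [lra|]. apply Rlt_le, Rinv_0_lt_compat; lra. }
assert (Rpower s (1 / (a + 1)) * / s * K <= 1 * K) by (apply Rmult_le_compat_r; lra).
assert (a * K * / s <= a * K * 1) by (apply Rmult_le_compat_l; nra).
unfold Rdiv. lra.
Qed.

(* The value of (F o phi)' + (F o phi)'' when F' = - F H, F'' = F H L, phi' = f1, phi'' = f2. *)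
Lemma second_order_combination_nonpos F H L f1 f2 : 0 < F -> 0 < H -> 0 <= f1 ->
  - f2 <= f1 / 2 -> L * f1 <= / 2 ->
  f1 * (- F * H) + (f2 * (- F * H) + f1 ^ 2 * (F * H * L)) <= 0.
Proof.
intros HF HH Hf1 Hf2 HL.
assert (HFH : 0 < F * H) by (apply Rmult_lt_0_compat; lra).
replace (f1 * (- F * H) + (f2 * (- F * H) + f1 ^ 2 * (F * H * L)))
  with (F * H * (f1 * (L * f1) - f1 - f2)) by ring.
assert (f1 * (L * f1) <= f1 / 2) by nra.
nra.
Qed.

Lemma locally_shifted_power_pos a C p : 0 < 1 + p -> 0 < shifted_power a C p ->
  locally p (fun q => 0 < 1 + q /\ 0 < shifted_power a C q).
Proof.
intros Hp Hs. apply filter_and.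
- apply (filter_imp (fun q => -1 < q)); [intros; lra|]. apply open_gt. lra.
- assert (Hd : ex_derive (shifted_power a C) p).
  { unfold shifted_power, Rpower. auto_derive. lra. }
  exact (ex_derive_continuous _ _ Hd _ (open_gt 0 _ Hs)).
Qed.

Lemma profile_comp_derive_sum_nonpos (a C : R) (phi : R -> R) (x : R) :
  0 <= a -> 0 < 1 + phi x -> 1 <= shifted_power a C (phi x) ->
  locally x (ex_derive phi) -> ex_derive (Derive phi) x ->
  0 <= Derive phi x -> - Derive (Derive phi) x <= Derive phi x / 2 ->
  (a + 1) * Rpower (1 + phi x) a * Derive phi x <= / 2 ->
  ex_derive (fun y => profile a C (phi y)) x /\
  ex_derive (Derive (fun y => profile a C (phi y))) x /\
  Derive (fun y => profile a C (phi y)) x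
    + Derive (Derive (fun y => profile a C (phi y))) x <= 0.
Proof.
intros Ha Hp Hs Hphi Hphi2 Hf1 Hf2 Hslope.
set (p := phi x) in *.
assert (HF : locally p (fun q => is_derive (profile a C) q (- profile a C q * profile_rate a C q))).
{ generalize (locally_shifted_power_pos a C p Hp ltac:(lra)). apply filter_imp.
  intros q [Hq Hsq]. apply is_derive_profile; lra. }
assert (HF' := is_derive_profile_slope a C p ltac:(lra) Hp ltac:(lra)).
destruct (is_derive2_comp _ _ phi x _ Hphi Hphi2 HF HF') as [Hw1 Hw2].
split; [eexists; exact Hw1|]. split; [eexists; exact Hw2|].
replace (Derive (fun y => profile a C (phi y)) x)
  with (Derive phi x * (- profile a C p * profile_rate a C p))
  by (symmetry; exact (is_derive_unique _ _ _ Hw1)).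
replace (Derive (Derive (fun y => profile a C (phi y))) x)
  with (Derive (Derive phi) x * (- profile a C p * profile_rate a C p) + Derive phi x ^ 2 *
        (profile a C p * profile_rate a C p * (profile_rate a C p - rate_log_derivative a C p)))
  by (symmetry; exact (is_derive_unique _ _ _ Hw2)).
apply second_order_combination_nonpos.
- apply exp_pos.
- apply profile_rate_pos. lra.
- exact Hf1.
- exact Hf2.
- eapply Rle_trans; [|exact Hslope].
  apply Rmult_le_compat_r; [exact Hf1|]. now apply profile_rate_sub_log_derivative_le.
Qed.

Lemma slope_bound_of_little_o a p f : 0 <= a -> 1 <= p -> 0 <= f ->
  f <= / (2 * (a + 1) * Rpower 2 a) * Rpower p (- a) ->
  (a + 1) * Rpower (1 + p) a * f <= / 2.
Proof.
intros Ha Hp Hf0 Hf.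
assert (H2 : 0 < Rpower 2 a) by apply exp_pos.
assert (Hpa : 0 < Rpower p a) by apply exp_pos.
assert (Hgrowth : Rpower (1 + p) a <= Rpower 2 a * Rpower p a).
{ rewrite Rpower_mult_distr by lra. apply Rle_Rpower_l; lra. }
rewrite Rpower_Ropp in Hf.
apply Rle_trans with ((a + 1) * (Rpower 2 a * Rpower p a) * f).
- apply Rmult_le_compat_r; [lra|]. apply Rmult_le_compat_l; lra.
- apply Rmult_le_compat_l with (r := (a + 1) * Rpower 2 a * Rpower p a) in Hf;
    [|left; repeat apply Rmult_lt_0_compat; lra].
  replace ((a + 1) * Rpower 2 a * Rpower p a * (/ (2 * (a + 1) * Rpower 2 a) * / Rpower p a))
    with (/ 2) in Hf by (field; lra).
  lra.
Qed.

Lemma level_vanishes alpha rho eps : 0 < alpha + 1 -> 0 < rho -> 0 < eps ->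
  exists t1, 0 < t1 /\ forall t, t1 <= t -> level alpha rho t < eps.
Proof.
intros Ha Hrho Heps.
set (K := Rmax 2 (2 - ln eps)).
assert (HK : 2 <= K /\ 2 - ln eps <= K) by (split; [apply Rmax_l|apply Rmax_r]).
assert (HKa : 1 < Rpower K (alpha + 1)).
{ rewrite <- (Rpower_O K) at 1 by lra. apply Rpower_lt; lra. }
assert (Hra : 0 < rho * (alpha + 1)) by nra.
exists ((Rpower K (alpha + 1) - 1) / (rho * (alpha + 1))).
split; [apply Rdiv_lt_0_compat; lra|]. intros t Ht.
assert (HC : Rpower K (alpha + 1) <= rho * (alpha + 1) * t + 1).
{ apply Rmult_le_compat_l with (r := rho * (alpha + 1)) in Ht; [|lra].
  replace (rho * (alpha + 1) * ((Rpower K (alpha + 1) - 1) / (rho * (alpha + 1))))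
    with (Rpower K (alpha + 1) - 1) in Ht by (field; lra).
  lra. }
assert (HR : K <= Rpower (rho * (alpha + 1) * t + 1) (1 / (alpha + 1))).
{ replace K with (Rpower (Rpower K (alpha + 1)) (1 / (alpha + 1))).
  - apply Rle_Rpower_l; [apply Rlt_le, Rdiv_lt_0_compat|]; lra.
  - rewrite Rpower_mult. replace ((alpha + 1) * (1 / (alpha + 1))) with 1 by (field; lra).
    apply Rpower_1; lra. }
unfold level. rewrite <- (exp_ln eps) by exact Heps. apply exp_increasing. lra.
Qed.

Lemma shifted_power_ge1_below_level alpha rho t v :
  0 < alpha + 1 -> 0 <= rho * (alpha + 1) * t -> 0 < v -> v <= level alpha rho t ->
  1 <= shifted_power alpha (rho * (alpha + 1) * t) (- ln v).
Proof.
intros Ha HC Hv Hlev.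
set (R1 := Rpower (rho * (alpha + 1) * t + 1) (1 / (alpha + 1))).
assert (HR1 : 0 < R1) by apply exp_pos.
assert (Hp : R1 <= 1 + - ln v).
{ apply ln_le in Hlev; [|exact Hv].
  unfold level in Hlev. rewrite ln_exp in Hlev. fold R1 in Hlev. lra. }
assert (HRa : Rpower R1 (alpha + 1) = rho * (alpha + 1) * t + 1).
{ unfold R1. rewrite Rpower_mult. replace (1 / (alpha + 1) * (alpha + 1)) with 1 by (field; lra).
  apply Rpower_1; lra. }
unfold shifted_power.
enough (rho * (alpha + 1) * t + 1 <= Rpower (1 + - ln v) (alpha + 1)) by lra.
rewrite <- HRa. apply Rle_Rpower_l; lra.
Qed.

Lemma phi0_derivable_twice (u0 : R -> R) (xi : R) :
  (forall y, 0 < u0 y) ->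
  (forall y, xi < y -> ex_derive u0 y /\ ex_derive (Derive u0) y) ->
  forall x, xi < x -> locally x (ex_derive (phi0 u0)) /\ ex_derive (Derive (phi0 u0)) x.
Proof.
intros Hpos Hu0 x Hx.
assert (Hd : locally x (fun y => is_derive (phi0 u0) y (- (Derive u0 y / u0 y)))).
{ apply (filter_imp (fun y => xi < y)); [|now apply open_gt].
  intros y Hy. destruct (Hu0 y Hy) as [Hd1 _]. specialize (Hpos y).
  unfold phi0. auto_derive; [split; [exact Hd1|lra]|]. rewrite Rmult_1_l. reflexivity. }
split.
- revert Hd. apply filter_imp. intros y Hy. eexists. exact Hy.
- apply (ex_derive_ext_loc (fun y => - (Derive u0 y / u0 y))).
  + revert Hd. apply filter_imp. intros y Hy. symmetry. now apply is_derive_unique.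
  + destruct (Hu0 x Hx) as [Hd1 Hd2]. specialize (Hpos x).
    auto_derive. repeat split; auto. lra.
Qed.

Lemma phi0_nondecreasing (u0 : R -> R) (xi : R) :
  (forall y, 0 < u0 y) -> (forall y z, xi <= y -> y <= z -> u0 z <= u0 y) ->
  forall y z, xi <= y -> y <= z -> phi0 u0 y <= phi0 u0 z.
Proof.
intros Hpos Hmono y z Hy Hyz. unfold phi0.
apply Ropp_le_contravar, ln_le; [apply Hpos|]. now apply Hmono.
Qed.

Lemma eventually_admissible a (phi : R -> R) (xi : R) : 0 <= a ->
  (forall x, xi < x -> locally x (ex_derive phi) /\ ex_derive (Derive phi) x) ->
  (forall y z, xi <= y -> y <= z -> phi y <= phi z) ->
  little_o_pinfty (Derive phi) (fun x => Rpower (phi x) (- a)) ->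
  little_o_pinfty (Derive (Derive phi)) (Derive phi) ->
  exists X, forall x, X < x -> 1 <= phi x ->
    locally x (ex_derive phi) /\ ex_derive (Derive phi) x /\ 0 <= Derive phi x /\
    - Derive (Derive phi) x <= Derive phi x / 2 /\
    (a + 1) * Rpower (1 + phi x) a * Derive phi x <= / 2.
Proof.
intros Ha Hreg Hmono Ho1 Ho2.
assert (Heps : 0 < / (2 * (a + 1) * Rpower 2 a)).
{ apply Rinv_0_lt_compat. pose proof (exp_pos (a * ln 2)). unfold Rpower. nra. }
destruct (Ho1 _ Heps) as [M1 HM1]. destruct (Ho2 (/ 2) ltac:(lra)) as [M2 HM2].
exists (Rmax xi (Rmax M1 M2)). intros x Hx Hp.
apply Rmax_Rlt in Hx as [Hxi Hx]. apply Rmax_Rlt in Hx as [HxM1 HxM2].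
destruct (Hreg x Hxi) as [Hd1 Hd2].
assert (Hf1 : 0 <= Derive phi x).
{ apply (is_derive_nonneg_of_nondecreasing phi x).
  - intros y Hy. apply Hmono; lra.
  - exact (Derive_correct _ _ (locally_singleton _ _ Hd1)). }
specialize (HM1 x ltac:(lra)). specialize (HM2 x ltac:(lra)).
rewrite (Rabs_pos_eq (Derive phi x)) in HM1, HM2 by exact Hf1.
rewrite (Rabs_pos_eq (Rpower (phi x) (- a))) in HM1 by (left; apply exp_pos).
repeat split; auto.
- pose proof (Rle_abs (- Derive (Derive phi) x)). rewrite Rabs_Ropp in *. lra.
- apply slope_bound_of_little_o; auto.
Qed.

Lemma right_of_level_set (u0 : R -> R) (alpha rho X : R) :
  0 < alpha + 1 -> 0 < rho -> continuity u0 -> (forall y, 0 < u0 y) ->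
  (exists c M, 0 < c /\ forall y, y <= M -> c <= u0 y) -> is_lim u0 p_infty 0 ->
  exists t1, 0 < t1 /\ forall t x, t1 <= t -> Rbar_le (x0 u0 alpha rho t) (Finite x) ->
    X < x /\ 1 < phi0 u0 x /\ 1 <= shifted_power alpha (rho * (alpha + 1) * t) (phi0 u0 x).
Proof.
intros Ha Hrho Hc Hpos Hleft Hlim.
destruct (continuity_pos_lower_bound_left u0 X Hc Hpos Hleft) as [m [Hm HmX]].
assert (Hsmall : 0 < Rmin m (exp (-1))) by (apply Rmin_glb_lt; [lra|apply exp_pos]).
destruct (level_vanishes alpha rho _ Ha Hrho Hsmall) as [t1 [Ht1 Hlev]].
exists t1. split; [exact Ht1|]. intros t x Ht Hx.
specialize (Hlev t Ht). pose proof (Rmin_l m (exp (-1))). pose proof (Rmin_r m (exp (-1))).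
assert (Hux : u0 x <= level alpha rho t).
{ apply (le_level_right_of_sup_level u0 _ x Hc Hlim); [apply exp_pos|exact Hx]. }
split; [|split].
- apply Rnot_le_lt. intros HxX. specialize (HmX x HxX). lra.
- assert (Hln : ln (u0 x) < ln (exp (-1))) by (apply ln_increasing; [apply Hpos|lra]).
  rewrite ln_exp in Hln. unfold phi0. lra.
- apply shifted_power_ge1_below_level; [lra| |apply Hpos|exact Hux].
  apply Rmult_le_pos; [apply Rmult_le_pos|]; lra.
Qed.

Theorem lemma3p2 (alpha : R) (u0 : R -> R) (rho : R) :
  0 < alpha ->
  (forall x, 0 <= u0 x <= 1) ->
  unif_continuous u0 ->
  (forall x, 0 < u0 x) ->
  (* liminf_{x -> -oo} u0 > 0 *)
  (exists c M : R, 0 < c /\ forall x, x <= M -> c <= u0 x) ->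
  is_lim u0 p_infty 0 ->
  (exists xi0 : R, 0 < xi0 /\
     (* C^2 on (xi0, +oo) *)
     (forall x, xi0 < x ->
        ex_derive u0 x /\ ex_derive (Derive u0) x /\
        continuous (Derive (Derive u0)) x) /\
     (* nonincreasing on [xi0, +oo) *)
     (forall x y, xi0 <= x -> x <= y -> u0 y <= u0 x)) ->
  little_o_pinfty (Derive (phi0 u0)) (fun x => Rpower (phi0 u0 x) (- alpha)) ->
  little_o_pinfty (Derive (Derive (phi0 u0))) (Derive (phi0 u0)) ->
  0 < rho ->
  exists t1 : R, 0 < t1 /\
    forall t x : R, t1 <= t -> Rbar_le (x0 u0 alpha rho t) (Finite x) ->
      ex_derive (wfun u0 alpha rho t) x /\
      ex_derive (Derive (wfun u0 alpha rho t)) x /\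
      Derive (wfun u0 alpha rho t) x
        + Derive (Derive (wfun u0 alpha rho t)) x <= 0.
Proof.
intros Ha _ Huc Hpos Hleft Hlim [xi0 [_ [HC2 Hmono]]] Ho1 Ho2 Hrho.
assert (Hreg : forall x, xi0 < x ->
  locally x (ex_derive (phi0 u0)) /\ ex_derive (Derive (phi0 u0)) x).
{ apply phi0_derivable_twice; [exact Hpos|]. intros y Hy. now destruct (HC2 y Hy) as [? [? _]]. }
destruct (eventually_admissible alpha (phi0 u0) xi0 ltac:(lra) Hreg
  (phi0_nondecreasing u0 xi0 Hpos Hmono) Ho1 Ho2) as [X HX].
destruct (right_of_level_set u0 alpha rho X ltac:(lra) Hrho
  (unif_continuous_continuity u0 Huc) Hpos Hleft Hlim) as [t1 [Ht1 Hright]].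
exists t1. split; [exact Ht1|]. intros t x Ht Hx.
destruct (Hright t x Ht Hx) as [HxX [Hp Hs]].
destruct (HX x HxX ltac:(lra)) as (Hd1 & Hd2 & Hf1 & Hf2 & Hslope).
apply profile_comp_derive_sum_nonpos; auto; lra.
Qed.
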